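(* Let $\alpha\in(0,\pi/2]$ and define $$r(d)=\Big(16\sin^3\alpha\,d^2+30\big((3\cos\alpha-4)\sin\alpha+\alpha(4\cos\alpha-3)\big)\Big)^2,\qquad d\in\mathbb{R}.$$ Then $r$ has precisely one positive zero, which is a double zero, namely $$d_1=\frac{\sqrt{30}}{4}\sqrt{\frac{\alpha(3-4\cos\alpha)+(4-3\cos\alpha)\sin\alpha}{\sin^3\alpha}},$$ and it satisfies $d_1>\tfrac{5}{2}$.
   Context: The function $r$ arises as the resultant with respect to $u_1$ of the two polynomial equations in the system stated in this paper for the non-symmetric case of interpolating circular arc data by degree-7 Pythagorean-hodograph curves; only the explicit formula above is needed. *)

From Stdlib Require Import Reals.
From Coquelicot Require Import Coquelicot.
Open Scope R_scope.

Definition r_fun (alpha d : R) : R :=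
  (16 * sin alpha ^ 3 * d ^ 2
   + 30 * ((3 * cos alpha - 4) * sin alpha + alpha * (4 * cos alpha - 3))) ^ 2.

Definition d1_val (alpha : R) : R :=
  sqrt 30 / 4 *
  sqrt ((alpha * (3 - 4 * cos alpha) + (4 - 3 * cos alpha) * sin alpha)
        / sin alpha ^ 3).

(** Writing [s = sin alpha], [c = cos alpha] and
    [K = alpha (3 - 4 c) + (4 - 3 c) s], the function is
    [r(d) = (16 s^3 d^2 - 30 K)^2], the square of an even quadratic. Once
    [K > 0] is known, its only positive zero is [sqrt (30 K / (16 s^3)) = d1],
    a double zero with [r''(d1) = 8 (16 s^3) (30 K) <> 0]. Both [K > 0] and
    [d1 > 5/2] follow from [10 s^3 < 3 K], which is checked by replacing [sin]
    and [cos] by their Taylor bounds of degree 5 and 4 on [(0, pi/2]]. *)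

From Stdlib Require Import Reals Lra Psatz.
From Coquelicot Require Import Coquelicot.
Open Scope R_scope.

Section SquaredQuadratic.

Variables a b : R.

Definition sq_quadratic (d : R) : R := (a * d ^ 2 - b) ^ 2.

Lemma is_derive_sq_quadratic (d : R) :
  is_derive sq_quadratic d (4 * a * d * (a * d ^ 2 - b)).
Proof. unfold sq_quadratic; auto_derive; [exact I | ring]. Qed.

Lemma Derive_sq_quadratic (d : R) :
  Derive sq_quadratic d = 4 * a * d * (a * d ^ 2 - b).
Proof. apply is_derive_unique, is_derive_sq_quadratic. Qed.

Lemma Derive_2_sq_quadratic (d : R) :
  Derive_n sq_quadratic 2 d = 4 * a * (a * d ^ 2 - b) + 8 * a ^ 2 * d ^ 2.
Proof.
  simpl; rewrite (Derive_ext _ _ _ Derive_sq_quadratic).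
  apply is_derive_unique; auto_derive; [exact I | ring].
Qed.

Hypotheses (Ha : 0 < a) (Hb : 0 < b).

Let root := sqrt (b / a).

Lemma sq_quadratic_root_pos : 0 < root.
Proof. apply sqrt_lt_R0, Rdiv_lt_0_compat; assumption. Qed.

Lemma sq_quadratic_root_sq : a * root ^ 2 = b.
Proof.
  unfold root; rewrite <- Rsqr_pow2, Rsqr_sqrt.
  - field; lra.
  - apply Rlt_le, Rdiv_lt_0_compat; assumption.
Qed.

Lemma sq_quadratic_eq0 (d : R) : 0 < d -> (sq_quadratic d = 0 <-> d = root).
Proof.
  intros Hd; unfold sq_quadratic.
  pose proof sq_quadratic_root_pos as Hroot; pose proof sq_quadratic_root_sq as Hroot_sq.
  split.
  - intros Hsq0; rewrite <- Rsqr_pow2 in Hsq0; apply Rsqr_0_uniq in Hsq0.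
    assert (Hfac : a * ((d - root) * (d + root)) = 0) by nra.
    apply Rmult_integral in Hfac as [|Hfac]; [lra|].
    apply Rmult_integral in Hfac as [|]; lra.
  - intros ->; rewrite sq_quadratic_root_sq; ring.
Qed.

Lemma Derive_sq_quadratic_root : Derive sq_quadratic root = 0.
Proof. rewrite Derive_sq_quadratic, sq_quadratic_root_sq; ring. Qed.

Lemma Derive_2_sq_quadratic_root : Derive_n sq_quadratic 2 root = 8 * a * b.
Proof.
  rewrite Derive_2_sq_quadratic.
  replace (8 * a ^ 2 * root ^ 2) with (8 * a * (a * root ^ 2)) by ring.
  rewrite sq_quadratic_root_sq; ring.
Qed.

Lemma sq_quadratic_root_gt (m : R) : 0 <= m -> a * m ^ 2 < b -> m < root.
Proof.
  intros Hm Hlt; unfold root.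
  rewrite <- (sqrt_pow2 m Hm).
  apply sqrt_lt_1; [nra | apply Rlt_le, Rdiv_lt_0_compat; assumption |].
  apply Rmult_lt_reg_l with a; [assumption|].
  field_simplify; lra.
Qed.

End SquaredQuadratic.

Definition d1_numerator (x s c : R) : R := x * (3 - 4 * c) + (4 - 3 * c) * s.

Lemma r_fun_sq_quadratic (alpha d : R) :
  r_fun alpha d =
  sq_quadratic (16 * sin alpha ^ 3)
    (30 * d1_numerator alpha (sin alpha) (cos alpha)) d.
Proof. unfold r_fun, sq_quadratic, d1_numerator; ring. Qed.

Lemma d1_val_sqrt (alpha : R) :
  d1_val alpha =
  sqrt (30 * d1_numerator alpha (sin alpha) (cos alpha) / (16 * sin alpha ^ 3)).
Proof.
  unfold d1_val, d1_numerator, Rdiv.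
  rewrite Rinv_mult.
  replace (30 * (alpha * (3 - 4 * cos alpha) + (4 - 3 * cos alpha) * sin alpha)
           * (/ 16 * / sin alpha ^ 3))
    with ((30 * / 16) * ((alpha * (3 - 4 * cos alpha)
           + (4 - 3 * cos alpha) * sin alpha) * / sin alpha ^ 3)) by ring.
  rewrite (sqrt_mult_alt (30 * / 16)), (sqrt_mult_alt 30) by lra.
  replace (/ 16) with ((/ 4) ^ 2) by field.
  rewrite sqrt_pow2 by lra.
  reflexivity.
Qed.

Lemma sin_cos_taylor_bounds (x : R) : 0 <= x <= PI / 2 ->
  x - x ^ 3 / 6 <= sin x <= x - x ^ 3 / 6 + x ^ 5 / 120 /\
  cos x <= 1 - x ^ 2 / 2 + x ^ 4 / 24.
Proof.
  intros Hx; pose proof PI_RGT_0.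
  pose proof (sin_bound x 0 ltac:(lra) ltac:(lra)) as Hsin.
  pose proof (cos_bound x 0 ltac:(lra) ltac:(lra)) as [_ Hcos].
  unfold sin_approx, cos_approx, sin_term, cos_term in *; simpl in *.
  split; lra.
Qed.

Lemma d1_numerator_gap_le (x s c sl su ch : R) :
  0 <= x -> 0 <= sl <= s -> s <= su -> c <= ch <= 4 / 3 ->
  3 * d1_numerator x sl ch - 10 * su ^ 3 <= 3 * d1_numerator x s c - 10 * s ^ 3.
Proof.
  intros Hx [Hsl Hs] Hsu [Hc Hch]; unfold d1_numerator.
  assert (0 <= (4 * x + 3 * s) * (ch - c)) by (apply Rmult_le_pos; lra).
  assert (0 <= (4 - 3 * ch) * (s - sl)) by (apply Rmult_le_pos; lra).
  assert (s ^ 3 <= su ^ 3) by (apply pow_incr; lra).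
  nra.
Qed.

(* The gap in [d1_numerator_taylor_gap] divided by [x^5], as a polynomial in [y = x^2]. *)
Lemma taylor_gap_quotient_pos (y : R) : 0 <= y <= 4 ->
  0 < 27/8 - 49/48 * y + 7/54 * y ^ 2 - 13/1440 * y ^ 3 + 1/2880 * y ^ 4
      - 1/172800 * y ^ 5.
Proof. intros Hy; nra. Qed.

Lemma d1_numerator_taylor_gap (x : R) : 0 < x <= 2 ->
  10 * (x - x ^ 3 / 6 + x ^ 5 / 120) ^ 3
  < 3 * d1_numerator x (x - x ^ 3 / 6) (1 - x ^ 2 / 2 + x ^ 4 / 24).
Proof.
  intros Hx.
  assert (Hx2 : 0 <= x ^ 2 <= 4) by nra.
  pose proof (taylor_gap_quotient_pos (x ^ 2) Hx2) as HQ.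
  pose proof (pow_lt x 5 ltac:(lra)) as Hx5.
  apply Rminus_lt_0.
  replace (3 * d1_numerator x (x - x ^ 3 / 6) (1 - x ^ 2 / 2 + x ^ 4 / 24)
           - 10 * (x - x ^ 3 / 6 + x ^ 5 / 120) ^ 3)
    with (x ^ 5 * (27/8 - 49/48 * x ^ 2 + 7/54 * (x ^ 2) ^ 2
                   - 13/1440 * (x ^ 2) ^ 3 + 1/2880 * (x ^ 2) ^ 4
                   - 1/172800 * (x ^ 2) ^ 5))
    by (unfold d1_numerator; field).
  apply Rmult_lt_0_compat; assumption.
Qed.

Lemma sin_cube_lt_d1_numerator (x : R) : 0 < x <= PI / 2 ->
  10 * sin x ^ 3 < 3 * d1_numerator x (sin x) (cos x).
Proof.
  intros Hx; pose proof PI_4.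
  assert (Hx2 : 0 < x <= 2) by lra.
  destruct (sin_cos_taylor_bounds x ltac:(lra)) as [[Hsl Hsu] Hc].
  pose proof (d1_numerator_taylor_gap x Hx2) as Hgap.
  assert (Hsl0 : 0 <= x - x ^ 3 / 6) by nra.
  assert (Hch : 1 - x ^ 2 / 2 + x ^ 4 / 24 <= 4 / 3) by nra.
  pose proof (d1_numerator_gap_le x (sin x) (cos x) (x - x ^ 3 / 6)
                (x - x ^ 3 / 6 + x ^ 5 / 120) (1 - x ^ 2 / 2 + x ^ 4 / 24)
                ltac:(lra) ltac:(lra) Hsu ltac:(lra)).
  lra.
Qed.

Theorem lemma1 (alpha : R) (Halpha : 0 < alpha <= PI / 2) :
  (* d1 is positive and is the unique positive zero of r *)
  0 < d1_val alpha /\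
  (forall d : R, 0 < d -> (r_fun alpha d = 0 <-> d = d1_val alpha)) /\
  (* it is a double zero: r' vanishes there, r'' does not *)
  Derive (r_fun alpha) (d1_val alpha) = 0 /\
  Derive_n (r_fun alpha) 2 (d1_val alpha) <> 0 /\
  (* and d1 > 5/2 *)
  5 / 2 < d1_val alpha.
Proof.
  pose proof PI_4.
  assert (Hs : 0 < sin alpha) by (apply sin_gt_0; lra).
  pose proof (pow_lt _ 3 Hs) as Hs3.
  pose proof (sin_cube_lt_d1_numerator alpha Halpha) as Hgap.
  rewrite d1_val_sqrt, (Derive_ext _ _ _ (r_fun_sq_quadratic alpha)),
    (Derive_n_ext _ _ 2 _ (r_fun_sq_quadratic alpha)).
  set (a := 16 * sin alpha ^ 3) in *.
  set (b := 30 * d1_numerator alpha (sin alpha) (cos alpha)) in *.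
  assert (Ha : 0 < a) by (unfold a; lra).
  assert (Hb : 0 < b) by (unfold b; lra).
  split; [|split; [|split; [|split]]].
  - exact (sq_quadratic_root_pos a b Ha Hb).
  - intros d Hd; rewrite r_fun_sq_quadratic; exact (sq_quadratic_eq0 a b Ha Hb d Hd).
  - exact (Derive_sq_quadratic_root a b Ha Hb).
  - rewrite Derive_2_sq_quadratic_root by assumption; nra.
  - apply sq_quadratic_root_gt; [assumption | assumption | lra | unfold a, b; lra].
Qed.
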